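(* Let $s>1$ be constant and $G\sim G_{n,p}$ with $p=\frac{\log n+\omega(n)}{n}$, $\omega(n)\to\infty$, $np=O(\log n)$. For the Birth-Death process on $G$ started from a single mutant vertex $v_0$, w.h.p. no vertex of $S_0$ is added to $N(X)$ and no vertex of $N(S_0)$ is added to $X$ during the first $\omega_0^{3/4}$ iterations.
   Context: Birth-Death process: $X\subseteq[n]$ is the mutant set (fitness $s$, others fitness 1), initially $\{v_0\}$; at each step a vertex $v$ is chosen with probability proportional to fitness and a uniformly random neighbor $u$ of $v$ takes the type of $v$. An iteration is a step in which $X$ changes. $N(A)=\{w\notin A:\exists v\in A, vw\in E(G)\}$. $\varepsilon=1/\log\log\log n$, $S_0=\{v:d(v)\le np/10\}$, $\omega_0=\frac{\varepsilon^2 np}{100\log(np)}$. W.h.p. refers to the randomness of both the graph and the process. *)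

From HB Require Import structures.
From mathcomp Require Import all_boot all_order all_algebra.
From mathcomp Require Import reals exp.
Set Implicit Arguments. Unset Strict Implicit. Unset Printing Implicit Defensive.
Import Order.TTheory GRing.Theory Num.Theory.
Local Open Scope ring_scope.

Section BD.
Variables (R : realType) (n : nat).

(* A simple graph on [n] = 'I_n is encoded by a set g of ordered pairs;
   the random graph G(n,p) only puts mass on sets of pairs (i,j) with i<j. *)
Definition adj (g : {set 'I_n * 'I_n}) (u v : 'I_n) : bool :=
  (u != v) && (((u, v) \in g) || ((v, u) \in g)).

Definition gnp_weight (p : R) (g : {set 'I_n * 'I_n}) : R :=
  if [forall e in g, (e.1 < e.2)%N]
  then \prod_(e : 'I_n * 'I_n | (e.1 < e.2)%N) (if e \in g then p else 1 - p)
  else 0.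

Definition deg (g : {set 'I_n * 'I_n}) (v : 'I_n) : nat := #|[set u | adj g v u]|.

Definition nbhd (g : {set 'I_n * 'I_n}) (A : {set 'I_n}) : {set 'I_n} :=
  [set w | (w \notin A) && [exists v in A, adj g v w]].

Definition S0 (p : R) (g : {set 'I_n * 'I_n}) : {set 'I_n} :=
  [set v | (deg g v)%:R <= n%:R * p / 10%:R].

Definition epsn : R := (ln (ln (ln n%:R)))^-1.
Definition omega0 (p : R) : R :=
  epsn ^+ 2 * (n%:R * p) / (100%:R * ln (n%:R * p)).
Definition iter_bound (p : R) : R := powR (omega0 p) (3%:R / 4%:R).

Definition fit (s : R) (X : {set 'I_n}) (v : 'I_n) : R := if v \in X then s else 1.

(* result of "u takes the type of v" *)
Definition upd (X : {set 'I_n}) (v u : 'I_n) : {set 'I_n} :=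
  if v \in X then u |: X else X :\ u.

(* One step of the Birth-Death process: v chosen with probability
   proportional to fitness, u a uniform random neighbour of v
   (if v has no neighbour, nothing happens). *)
Definition step_prob (s : R) (g : {set 'I_n * 'I_n}) (X Y : {set 'I_n}) : R :=
  \sum_v (fit s X v / \sum_w fit s X w) *
    (if deg g v == 0%N then (Y == X)%:R
     else \sum_(u | adj g v u) (Y == upd X v u)%:R / (deg g v)%:R).

Definition bad_change (p : R) (g : {set 'I_n * 'I_n}) (X Y : {set 'I_n}) : bool :=
  [exists w in S0 p g, (w \in nbhd g Y) && (w \notin nbhd g X)] ||
  [exists w in nbhd g (S0 p g), (w \in Y) && (w \notin X)].

(* Probability, starting from state X after c iterations, that within the next
   T steps a bad change happens at an iteration whose index is at most
   omega_0^{3/4}. (An iteration is a step in which X changes.) *)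
Fixpoint bad_within (s p : R) (g : {set 'I_n * 'I_n}) (T : nat)
    (X : {set 'I_n}) (c : nat) : R :=
  match T with
  | 0 => 0
  | T'.+1 =>
    \sum_(Y : {set 'I_n}) step_prob s g X Y *
      (if (Y != X) && ((c.+1)%:R <= iter_bound p) && bad_change p g X Y then 1
       else bad_within s p g T' Y (c + (Y != X))%N)
  end.

(* Joint probability (graph and process) that a bad change happens among the
   first omega_0^{3/4} iterations, within the first T steps of the process
   started from {v0}. *)
Definition bad_prob (s p : R) (v0 : 'I_n) (T : nat) : R :=
  \sum_(g : {set 'I_n * 'I_n}) gnp_weight p g * bad_within s p g T [set v0] 0.

End BD.

Definition pn {R : realType} (om : nat -> R) (n : nat) : R :=
  (ln n%:R + om n) / n%:R.

From mathcomp Require Import all_boot all_order all_algebra.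
From mathcomp Require Import reals sequences exp.
From mathcomp Require Import ring lra zify.
Import Order.TTheory GRing.Theory Num.Theory.
Local Open Scope ring_scope.
Set Implicit Arguments. Unset Strict Implicit.

(* Mutants spread only along edges, so after c iterations every mutant lies
   within distance c of v0, and a bad change at iteration c needs a vertex of
   S_0 within distance c + 2 of v0, i.e. the endpoint of a self-avoiding path
   from v0 of length k <= K := floor(omega_0^{3/4}) + 2.  For a fixed such path,
   the probability that it is present and ends in S_0 is at most
   p^k e^{np/5} (1 - (1 - e^{-2}) p)^{n-k-1}, by an exponential Markov bound on
   the number of neighbours of the endpoint off the path.  Summing over the n^k
   paths of each length gives exp(2(K+1) + K ln(np) - 7np/15), which tends to 0
   since K ln(np) = o(np) and np -> oo. *)

Section BirthDeath.
Variables (R : realType) (n : nat) (s p : R) (g : {set 'I_n * 'I_n}) (v0 : 'I_n).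

Lemma adjC u v : adj g u v = adj g v u.
Proof. by rewrite /adj eq_sym orbC. Qed.

Definition reachable (k : nat) (w : 'I_n) : Prop :=
  exists t : seq 'I_n, [/\ (size t <= k)%N, path (adj g) v0 t & last v0 t = w].

Lemma reachable_mono k k' w : (k <= k')%N -> reachable k w -> reachable k' w.
Proof. by move=> le_kk' [t [st pt lt]]; exists t; split=> //; apply: leq_trans le_kk'. Qed.

Lemma reachable_adj k x y : reachable k x -> adj g x y -> reachable k.+1 y.
Proof.
move=> [t [st pt lt]] axy; exists (rcons t y).
by rewrite size_rcons ltnS rcons_path pt lt axy last_rcons.
Qed.

Lemma reachable_uniq k w : reachable k w -> exists t : seq 'I_n,
  [/\ (size t <= k)%N, uniq (v0 :: t), path (adj g) v0 t & last v0 t = w].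
Proof.
move=> [t [st pt <-]]; case: (shortenP pt) => t' pt' ut' sub_t'.
exists t'; split=> //; apply: leq_trans st; apply: uniq_leq_size => //.
by case/andP: ut'.
Qed.

Lemma bad_change_reachable c (X Y : {set 'I_n}) :
  (forall y, y \in Y -> reachable c.+1 y) -> bad_change p g X Y ->
  exists2 w, w \in S0 p g & reachable c.+2 w.
Proof.
move=> reachY /orP[/existsP[w /andP[wS /andP[wN _]]]|/existsP[w /andP[wN /andP[wY _]]]].
  exists w => //; move: wN; rewrite inE => /andP[_ /existsP[y /andP[yY ayw]]].
  exact: reachable_adj (reachY y yY) ayw.
move: wN; rewrite inE => /andP[_ /existsP[z /andP[zS azw]]].
by exists z => //; apply: reachable_adj (reachY w wY) _; rewrite adjC.
Qed.

Hypothesis s_gt0 : 0 < s.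

Lemma fit_gt0 (X : {set 'I_n}) v : 0 < fit s X v.
Proof. by rewrite /fit; case: ifP. Qed.

Lemma step_prob_ge0 (X Y : {set 'I_n}) : 0 <= step_prob s g X Y.
Proof.
apply: sumr_ge0 => v _; apply: mulr_ge0.
  apply: divr_ge0; first exact: ltW (fit_gt0 _ _).
  by apply: sumr_ge0 => w _; apply: ltW (fit_gt0 _ _).
case: ifP => _; first by rewrite ler0n.
by apply: sumr_ge0 => u _; apply: divr_ge0; rewrite ler0n.
Qed.

Lemma sum_step_prob_le1 (X : {set 'I_n}) : \sum_Y step_prob s g X Y <= 1.
Proof.
rewrite /step_prob exchange_big /=.
have move_prob1 v : \sum_(Y : {set 'I_n}) (if deg g v == 0%N then (Y == X)%:R
     else \sum_(u | adj g v u) (Y == upd X v u)%:R / (deg g v)%:R) = 1 :> R.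
  case: eqP => [_|/eqP dv_neq0].
    by rewrite (bigD1 X) //= eqxx big1 ?addr0 // => Y /negbTE ->.
  rewrite exchange_big /= (eq_bigr (fun _ => (deg g v)%:R^-1)).
    rewrite sumr_const (_ : #|_| = deg g v); last by apply: eq_card => u; rewrite inE.
    by rewrite -[_ *+ deg g v]mulr_natr mulVf // pnatr_eq0.
  move=> u _; rewrite -mulr_suml (bigD1 (upd X v u)) //= eqxx.
  by rewrite big1 ?addr0 ?mul1r // => Y /negbTE ->.
under eq_bigr do rewrite -mulr_sumr move_prob1 mulr1.
rewrite -mulr_suml.
have [->|fit_neq0] := eqVneq (\sum_w fit s X w) 0; first by rewrite invr0 mulr0 ler01.
by rewrite mulfV.
Qed.

Lemma bad_within_le1 T (X : {set 'I_n}) c : bad_within s p g T X c <= 1.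
Proof.
elim: T X c => [|T IH] X c /=; first exact: ler01.
apply: le_trans (sum_step_prob_le1 X); apply: ler_sum => Y _.
rewrite -[leRHS]mulr1; apply: ler_wpM2l; first exact: step_prob_ge0.
by case: ifP.
Qed.

Lemma step_prob_eq0 (X Y : {set 'I_n}) : Y != X ->
  (forall v u, adj g v u -> Y != upd X v u) -> step_prob s g X Y = 0.
Proof.
move=> YX not_move; apply: big1 => v _; case: ifP => _.
  by rewrite (negbTE YX) mulr0.
rewrite [\sum_(u | adj g v u) _]big1 ?mulr0 // => u auv.
by rewrite (negbTE (not_move _ _ auv)) mul0r.
Qed.

Lemma bad_within_eq0 K :
  (forall c, (c.+1)%:R <= iter_bound n p -> (c.+2 <= K)%N) ->
  (forall w, w \in S0 p g -> ~ reachable K w) ->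
  forall T (X : {set 'I_n}) c, (forall x, x \in X -> reachable c x) ->
  bad_within s p g T X c = 0.
Proof.
move=> iter_le_K S0_far; elim=> [//|T IH] X c reachX /=; apply: big1 => Y _.
have [->|YX] := eqVneq Y X; first by rewrite /= addn0 IH // mulr0.
case: (boolP [exists v, exists u, adj g v u && (Y == upd X v u)]); last first.
  move=> no_move; rewrite step_prob_eq0 ?mul0r // => v u auv; apply/negP => /eqP eY.
  by apply: (negP no_move); apply/existsP; exists v; apply/existsP; exists u; rewrite auv eY eqxx.
move=> /existsP[v /existsP[u /andP[auv /eqP eY]]].
have reachY y : y \in Y -> reachable c.+1 y.
  rewrite eY /upd; case: ifP => vX; rewrite !inE.
    case/orP=> [/eqP ->|yX]; first exact: reachable_adj (reachX v vX) auv.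
    exact: reachable_mono (leqnSn c) (reachX y yX).
  by case/andP=> _ yX; apply: reachable_mono (leqnSn c) (reachX y yX).
rewrite /= addn1 IH //; case: ifP => [/andP[c_le bad]|]; last by rewrite mulr0.
have [w wS reach_w] := bad_change_reachable reachY bad.
by case: (S0_far w wS); apply: reachable_mono reach_w; apply: iter_le_K.
Qed.

Definition path_to_S0 (t : seq 'I_n) : bool :=
  [&& uniq (v0 :: t), path (adj g) v0 t & last v0 t \in S0 p g].

Lemma bad_within_le_paths K T :
  (forall c, (c.+1)%:R <= iter_bound n p -> (c.+2 <= K)%N) ->
  bad_within s p g T [set v0] 0 <=
    \sum_(k < K.+1) \sum_(t : k.-tuple 'I_n) (path_to_S0 t)%:R.
Proof.
move=> iter_le_K.
have sum_ge0 (P : pred 'I_K.+1) :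
    0 <= \sum_(k < K.+1 | P k) \sum_(t : k.-tuple 'I_n) (path_to_S0 t)%:R :> R.
  by apply: sumr_ge0 => k _; apply: sumr_ge0 => t _; rewrite ler0n.
case: (boolP [exists k : 'I_K.+1, exists t : k.-tuple 'I_n, path_to_S0 t]).
  case/existsP=> k /existsP[t t_bad]; apply: le_trans (bad_within_le1 _ _ _) _.
  rewrite (bigD1 k) //= (bigD1 t) //= t_bad -addrA lerDl.
  by apply: addr_ge0 (sum_ge0 _); apply: sumr_ge0 => t' _; rewrite ler0n.
move=> no_path; rewrite (bad_within_eq0 iter_le_K) ?sum_ge0 //; last first.
  by move=> x; rewrite inE => /eqP ->; exists [::].
move=> w wS /reachable_uniq [t [st ut pt lt]]; apply: (negP no_path).
apply/existsP; exists (Ordinal (st : (size t < K.+1)%N)).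
apply/existsP; exists (in_tuple t).
by rewrite /path_to_S0 ut pt lt wS.
Qed.

End BirthDeath.

Section Gnp.
Variables (R : realType) (n : nat) (p : R).
Local Notation pair := ('I_n * 'I_n)%type.
Local Notation upper e := ((e).1 < (e).2)%N.

Definition edge (x y : 'I_n) : pair := if (x < y)%N then (x, y) else (y, x).

Lemma edgeP x y x' y' :
  edge x y = edge x' y' -> (x = x' /\ y = y') \/ (x = y' /\ y = x').
Proof. by rewrite /edge; case: ifP; case: ifP => _ _ [-> ->]; tauto. Qed.

Lemma edge_inj x : injective (edge x).
Proof. by move=> y y' /edgeP [[_ ->]|[-> ->]]. Qed.

Lemma upper_edge x y : x != y -> upper (edge x y).
Proof. by move=> xy; rewrite /edge; case: ifP => //=; move: xy; rewrite -val_eqE /=; lia. Qed.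

Lemma adj_edge (g : {set pair}) x y :
  [forall e in g, upper e] -> adj g x y -> edge x y \in g.
Proof.
move=> /forall_inP g_upper /andP[_ /orP[xy_g|yx_g]]; rewrite /edge.
  by rewrite (g_upper _ xy_g).
by rewrite ltnNge (ltnW (g_upper _ yx_g)).
Qed.

Lemma edge_adj (g : {set pair}) x y : x != y -> edge x y \in g -> adj g x y.
Proof. by rewrite /adj /edge => -> /=; case: ifP => _ ->; rewrite ?orbT. Qed.

Lemma gnp_weight_ge0 (g : {set pair}) : 0 <= p <= 1 -> 0 <= gnp_weight p g.
Proof.
case/andP=> p_ge0 p_le1; rewrite /gnp_weight; case: ifP => // _.
by apply: prodr_ge0 => e _; case: ifP; rewrite // subr_ge0.
Qed.

Lemma gnp_expect_prod (F : pair -> bool -> R) :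
  \sum_(g : {set pair}) gnp_weight p g * \prod_(e : pair | upper e) F e (e \in g) =
  \prod_(e : pair | upper e) (p * F e true + (1 - p) * F e false).
Proof.
pose G (e : pair) (b : bool) : R :=
  if upper e then (if b then p else 1 - p) * F e b else if b then 0 else 1.
have weightG g : gnp_weight p g * \prod_(e : pair | upper e) F e (e \in g) =
    \prod_e G e (e \in g).
  rewrite [RHS](bigID (fun e : pair => upper e)) /=.
  have -> : \prod_(e : pair | ~~ upper e) G e (e \in g) = [forall e in g, upper e]%:R.
    case: forall_inP => [g_upper|not_upper].
      apply: big1 => e /negbTE e_low; rewrite /G e_low.
      by case: ifP => // /g_upper; rewrite e_low.
    have : ~~ [forall e in g, upper e] by apply/forall_inP.
    rewrite negb_forall_in => /exists_inP [e eg e_low].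
    by rewrite (bigD1 e) //= /G (negbTE e_low) eg mul0r.
  rewrite /gnp_weight; case: ifP => _; last by rewrite !mul0r mulr0.
  rewrite mulr1 -big_split /=; apply: eq_bigr => e e_up; rewrite /G e_up.
  by case: (e \in g).
rewrite (eq_bigr _ (fun g _ => weightG g)).
transitivity (\prod_e (G e true + G e false)).
  rewrite (reindex (fun f : {ffun pair -> bool} => [set e | f e])) /=; last first.
    exists (fun g : {set pair} => [ffun e => e \in g]) => g _.
      by apply/ffunP => e; rewrite ffunE inE.
    by apply/setP => e; rewrite inE ffunE.
  under eq_bigr do under eq_bigr do rewrite inE.
  by rewrite -bigA_distr_bigA /=; apply: eq_bigr => e _; rewrite big_bool.
rewrite [RHS]big_mkcond /=; apply: eq_bigr => e _; rewrite /G.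
by case: ifP => _; rewrite ?addr0 ?add0r.
Qed.

Section SelfAvoidingPath.
Variables (v0 : 'I_n) (t : seq 'I_n).
Hypothesis uniq_t : uniq (v0 :: t).

Definition path_edges : {set pair} :=
  [set edge (nth v0 (v0 :: t) i) (nth v0 t i) | i : 'I_(size t)].

Definition end_spokes : {set pair} :=
  [set edge (last v0 t) u | u in ~: [set x in v0 :: t]].

(* Requires every edge of the path and charges e^{-2} per neighbour of the
   endpoint off the path; since e^{-2 d} >= e^{-2 np/10} on S_0, this is the
   exponential Markov bound for the degree of the endpoint. *)
Definition path_weight (e : pair) (b : bool) : R :=
  (if e \in path_edges then b%:R else 1) *
  (if (e \in end_spokes) && b then expR (-2) else 1).

Lemma nth_path_neq (i : 'I_(size t)) : nth v0 (v0 :: t) i != nth v0 t i.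
Proof.
have si : (i < size (v0 :: t))%N by rewrite /= ltnS ltnW.
have si1 : (i.+1 < size (v0 :: t))%N by rewrite /= ltnS.
by rewrite -[nth v0 t i]/(nth v0 (v0 :: t) i.+1) nth_uniq //; lia.
Qed.

Lemma path_edges_upper e : e \in path_edges -> upper e.
Proof. by case/imsetP => i _ ->; apply/upper_edge/nth_path_neq. Qed.

Lemma end_spokes_upper e : e \in end_spokes -> upper e.
Proof.
case/imsetP => u; rewrite !inE => u_out ->; apply: upper_edge.
by apply: contraNneq u_out => <-; apply: mem_last.
Qed.

Lemma path_edges_spokes_disj e : e \in path_edges -> e \notin end_spokes.
Proof.
case/imsetP => i _ ->; apply/negP; case/imsetP => u; rewrite !inE => u_out.
have on_i : nth v0 (v0 :: t) i \in v0 :: t by apply: mem_nth; rewrite /= ltnS ltnW.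
have on_i1 : nth v0 t i \in v0 :: t by rewrite in_cons mem_nth ?orbT.
by move/esym/edgeP => [[_ E]|[_ E]]; move: u_out; rewrite E -in_cons ?on_i ?on_i1.
Qed.

Lemma card_path_edges : #|path_edges| = size t.
Proof.
rewrite card_imset ?card_ord // => i j /edgeP.
rewrite -[nth v0 t i]/(nth v0 (v0 :: t) i.+1) -[nth v0 t j]/(nth v0 (v0 :: t) j.+1).
have si : (i < size (v0 :: t))%N by rewrite /= ltnS ltnW.
have sj : (j < size (v0 :: t))%N by rewrite /= ltnS ltnW.
have si1 : (i.+1 < size (v0 :: t))%N by rewrite /= ltnS.
have sj1 : (j.+1 < size (v0 :: t))%N by rewrite /= ltnS.
case=> [[/eqP E _]|[/eqP E1 /eqP E2]].
  by move: E; rewrite nth_uniq // => /eqP/val_inj.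
by move: E1 E2; rewrite !nth_uniq // => /eqP E1 /eqP E2; exfalso; lia.
Qed.

Lemma card_end_spokes : #|end_spokes| = (n - (size t).+1)%N.
Proof.
rewrite card_imset; last exact: edge_inj.
have split_n := cardsC [set x in v0 :: t]; rewrite cardsE card_ord in split_n.
move/card_uniqP: uniq_t => /= card_t.
have t_le_n : ((size t).+1 <= n)%N by rewrite -card_t -[X in (_ <= X)%N]split_n leq_addr.
by apply/eqP; rewrite -(eqn_add2l #|v0 :: t|) split_n card_t subnKC.
Qed.

Lemma path_to_S0_le_weight (g : {set pair}) : [forall e in g, upper e] ->
  (path_to_S0 p g v0 t)%:R <=
  expR (2 * (n%:R * p / 10%:R)) * \prod_(e : pair | upper e) path_weight e (e \in g).
Proof.
move=> g_upper; have weight_ge0 e b : 0 <= path_weight e b.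
  by apply: mulr_ge0; [case: ifP; case: b | case: ifP => //; rewrite expR_ge0].
case/boolP: (path_to_S0 p g v0 t) => [/and3P[_ pt endS0]|_]; last first.
  by apply: mulr_ge0; [exact: expR_ge0 | exact: prodr_ge0].
rewrite big_split /= [X in expR _ * (X * _)]big1 ?mul1r; last first.
  move=> e _; case: ifP => // /imsetP[i _ ->].
  by rewrite adj_edge //; move/pathP: pt => /(_ v0 i (ltn_ord i)).
set c := #|[pred e : pair | upper e && ((e \in end_spokes) && (e \in g))]|.
have -> : \prod_(e : pair | upper e) (if (e \in end_spokes) && (e \in g) then expR (-2) else 1) =
    expR (-2) ^+ c :> R.
  rewrite -prodr_const [RHS]big_mkcond [LHS]big_mkcond /=.
  by apply: eq_bigr => e _; rewrite !inE; case: (upper e); case: (e \in end_spokes); case: (e \in g).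
have c_le_deg : (c <= deg g (last v0 t))%N.
  apply: leq_trans (leq_imset_card (edge (last v0 t)) [set u | adj g (last v0 t) u]).
  apply: subset_leq_card; apply/subsetP => e; rewrite inE => /andP[_ /andP[]].
  case/imsetP => u; rewrite !inE => u_out -> e_g; apply/imsetP; exists u => //.
  rewrite inE edge_adj //; apply: contraNneq u_out => <-; exact: mem_last.
move: endS0; rewrite inE => deg_small; rewrite -(ler_nat R) in c_le_deg.
rewrite -expRM_natl -expRD; apply: le_trans (expR_ge1Dx _); lra.
Qed.

Lemma gnp_path_to_S0_le : 0 <= p <= 1 ->
  \sum_(g : {set pair}) gnp_weight p g * (path_to_S0 p g v0 t)%:R <=
  expR (2 * (n%:R * p / 10%:R)) *
    (p ^+ size t * (p * expR (-2) + (1 - p)) ^+ (n - (size t).+1)).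
Proof.
move=> p01; apply: (@le_trans _ _ (\sum_(g : {set pair}) gnp_weight p g *
   (expR (2 * (n%:R * p / 10%:R)) * \prod_(e : pair | upper e) path_weight e (e \in g)))).
  apply: ler_sum => g _; case g_upper: [forall e in g, upper e].
    by apply: ler_wpM2l; [exact: gnp_weight_ge0 | exact: path_to_S0_le_weight].
  by rewrite /gnp_weight g_upper !mul0r.
under eq_bigr do rewrite (mulrCA (gnp_weight p _)).
rewrite -mulr_sumr gnp_expect_prod; apply: ler_wpM2l; first exact: expR_ge0.
rewrite le_eqVlt; apply/orP; left; apply/eqP.
rewrite -card_end_spokes -card_path_edges -!prodr_const [LHS]big_mkcond.
rewrite [\prod_(e in path_edges) _]big_mkcond [\prod_(e in end_spokes) _]big_mkcond.
rewrite -big_split /=; apply: eq_bigr => e _; rewrite /path_weight.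
case: (boolP (e \in path_edges)) => [e_path|_].
  by rewrite (path_edges_upper e_path) (negbTE (path_edges_spokes_disj e_path)) /=
    !mulr1 mulr0 addr0.
case: (boolP (e \in end_spokes)) => [e_spoke|_].
  by rewrite (end_spokes_upper e_spoke) /= !mul1r mulr1.
by case: ifP => _; rewrite /= ?mulr1 // addrC subrK.
Qed.

End SelfAvoidingPath.

Lemma bad_prob_le_paths (s : R) (v0 : 'I_n) (K T : nat) : 0 < s -> 0 <= p <= 1 ->
  (forall c, (c.+1)%:R <= iter_bound n p -> (c.+2 <= K)%N) ->
  bad_prob s p v0 T <= \sum_(k < K.+1) (n ^ k)%:R *
    (expR (2 * (n%:R * p / 10%:R)) * (p ^+ k * (p * expR (-2) + (1 - p)) ^+ (n - k.+1))).
Proof.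
move=> s_gt0 p01 iter_le_K.
apply: (@le_trans _ _ (\sum_(g : {set pair}) gnp_weight p g *
   \sum_(k < K.+1) \sum_(t : k.-tuple 'I_n) (path_to_S0 p g v0 t)%:R)).
  apply: ler_sum => g _; apply: ler_wpM2l; first exact: gnp_weight_ge0.
  exact: bad_within_le_paths.
under eq_bigr do rewrite mulr_sumr.
rewrite exchange_big /=; apply: ler_sum => k _.
under eq_bigr do rewrite mulr_sumr.
rewrite exchange_big /=.
set path_bound := expR _ * _.
apply: (@le_trans _ _ (\sum_(t : k.-tuple 'I_n) path_bound)); last first.
  by rewrite sumr_const card_tuple card_ord mulr_natl.
apply: ler_sum => t _; case ut: (uniq (v0 :: t)).
  by have := gnp_path_to_S0_le ut p01; rewrite size_tuple.
rewrite big1; last by move=> g _; rewrite /path_to_S0 ut mulr0.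
have q_ge0 : 0 <= p * expR (-2) + (1 - p).
  by case/andP: p01 => p0 p1; rewrite addr_ge0 ?mulr_ge0 ?expR_ge0 ?subr_ge0.
by rewrite mulr_ge0 ?expR_ge0 ?mulr_ge0 ?exprn_ge0 //; case/andP: p01.
Qed.

End Gnp.

Section Estimates.
Variable R : realType.

Lemma nat_ge_eventually (x : R) : exists N, forall n, (N <= n)%N -> x <= n%:R.
Proof.
exists (Num.truncn x).+1 => n le_Nn; apply: le_trans (ltW (truncnS_gt x)) _.
by rewrite ler_nat.
Qed.

Lemma powR_invnK (x : R) k : 0 <= x -> (x `^ (k.+1%:R^-1)) ^+ k.+1 = x.
Proof.
move=> x_ge0; rewrite -powR_mulrn ?powR_ge0 // -powRrM mulVf ?pnatr_eq0 //.
by rewrite powRr1.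
Qed.

Lemma ln_le_root (x : R) k : 0 < x -> ln x <= k.+1%:R * x `^ (k.+1%:R^-1).
Proof.
move=> x_gt0; have root_gt0 : 0 < x `^ (k.+1%:R^-1) by apply: powR_gt0.
rewrite -{1}(powR_invnK k (ltW x_gt0)) lnXn // mulr_natl.
exact/ler_wMn2r/ltW/ln_sublinear.
Qed.

Lemma mul_ln_le (C x : R) : 1 <= x -> (2 * C) ^+ 2 <= x -> C * ln x <= x.
Proof.
move=> x_ge1 Cx; set y := x `^ (1.+1%:R^-1).
have y_ge0 : 0 <= y by apply: powR_ge0.
have y2 : y ^+ 2 = x by apply: powR_invnK; lra.
have ln_le : ln x <= 2 * y by apply: ln_le_root; lra.
have ln_ge0 : 0 <= ln x by apply: ln_ge0.
have [C_le0|C_gt0] := lerP C 0; first nra.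
have Cy : 2 * C <= y by rewrite -(@ler_pXn2r _ 2) ?nnegrE ?y2 //; lra.
apply: (@le_trans _ _ (C * (2 * y))); first by rewrite ler_wpM2l //; lra.
rewrite -y2 expr2; nra.
Qed.

Lemma in01_of_le_ln (n : nat) (C q : R) : 1 <= n%:R :> R -> (2 * C) ^+ 2 <= n%:R ->
  0 <= n%:R * q <= C * ln n%:R -> 0 <= q <= 1.
Proof.
move=> n_ge1 n_large /andP[nq_ge0 nq_le]; have n_gt0 : 0 < n%:R :> R by lra.
rewrite (pmulr_rge0 _ n_gt0) in nq_ge0; rewrite nq_ge0 /=.
have := le_trans nq_le (mul_ln_le n_ge1 n_large).
by rewrite -[X in _ <= X]mulr1 ler_pM2l.
Qed.

Lemma ln_ge_half (x : R) : 2 <= x -> 1 / 2 <= ln x.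
Proof.
move=> x_ge2; have x_gt0 : 0 < x by lra.
have inv_gt0 : 0 < x^-1 by rewrite invr_gt0.
have inv_le : x^-1 <= 2^-1 by rewrite lef_pV2 ?posrE; lra.
have ln_inv : ln (1 + (x^-1 - 1)) <= x^-1 - 1 by apply: le_ln1Dx; lra.
rewrite addrC subrK lnV ?posrE // in ln_inv; lra.
Qed.

Lemma omega0_le (n : nat) (p : R) : expR (expR (expR 1)) <= n%:R :> R -> 2 <= n%:R * p ->
  0 <= omega0 n p <= n%:R * p.
Proof.
move=> n_large np_ge2.
have lnlnln_ge1 : 1 <= ln (ln (ln (n%:R : R))).
  have ln_le_ln (x y : R) : 0 < x -> x <= y -> ln x <= ln y.
    by move=> x_gt0 xy; rewrite ler_ln // posrE //; apply: lt_le_trans xy.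
  rewrite -[X in X <= _](expRK 1); apply: (ln_le_ln); first exact: expR_gt0.
  rewrite -[leLHS]expRK; apply: (ln_le_ln); first exact: expR_gt0.
  by rewrite -[leLHS]expRK; apply: (ln_le_ln) => //; exact: expR_gt0.
have eps2_le1 : epsn R n ^+ 2 <= 1.
  by rewrite /epsn exprVn invf_le1 ?exprn_gt0 ?exprn_ege1 //; lra.
have eps2_ge0 : 0 <= epsn R n ^+ 2 by apply: sqr_ge0.
have ln_np := ln_ge_half np_ge2.
have denom_gt0 : 0 < 100%:R * ln (n%:R * p) by apply: mulr_gt0; lra.
apply/andP; split; last by rewrite /omega0 ler_pdivrMr //; nra.
by rewrite /omega0 divr_ge0 ?(ltW denom_gt0) // mulr_ge0 //; lra.
Qed.

Lemma iter_bound_le (n : nat) (p : R) : expR (expR (expR 1)) <= n%:R :> R ->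
  2 <= n%:R * p -> iter_bound n p <= (n%:R * p) `^ (3%:R / 4%:R).
Proof.
move=> n_large np_ge2; have /andP[om_ge0 om_le] := omega0_le n_large np_ge2.
by apply: ge0_ler_powR; rewrite ?nnegrE //; lra.
Qed.

Lemma sum_path_bounds_le (n K : nat) (p L : R) : 0 <= p <= 1 -> n%:R * p = L ->
  1 <= L ->
  \sum_(k < K.+1) (n ^ k)%:R * (expR (2 * (n%:R * p / 10%:R)) *
     (p ^+ k * (p * expR (-2) + (1 - p)) ^+ (n - k.+1)))
  <= expR (2 * K.+1%:R + K%:R * ln L - 7 / 15 * L).
Proof.
move=> /andP[p_ge0 p_le1] npL L_ge1; have L_gt0 : 0 < L by lra.
have lam_le : expR (-2) <= 1 / 3 :> R.
  have := expRxMexpNx_1 (2 : R); have := expR_ge1Dx (2 : R); have := expR_gt0 (-2 : R).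
  nra.
set q := p * expR (-2) + (1 - p).
have q_ge0 : 0 <= q by rewrite /q; have := expR_gt0 (-2 : R); nra.
have q_le : q <= expR (- (2 / 3 * p)) by apply: le_trans (expR_ge1Dx _); rewrite /q; nra.
set M := L ^+ K * expR (L / 5 - 2 / 3 * L + 2 / 3 * K.+1%:R).
apply: (@le_trans _ _ (\sum_(k < K.+1) M)).
  apply: ler_sum => -[k /= k_le_K] _; set m := (n - k.+1)%N.
  have n_le_m : n%:R <= m%:R + k.+1%:R :> R by rewrite -natrD ler_nat /m; lia.
  rewrite (_ : _ * _ = L ^+ k * (expR (2 * (n%:R * p / 10%:R)) * q ^+ m)); last first.
    by rewrite natrX -npL exprMn; ring.
  rewrite /M; apply: ler_pM.
  - by apply: exprn_ge0; lra.
  - by rewrite mulr_ge0 ?expR_ge0 ?exprn_ge0.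
  - by apply: ler_weXn2l => //; rewrite -ltnS.
  apply: (@le_trans _ _ (expR (2 * (L / 10)) * expR (- (2 / 3 * p)) ^+ m)).
    rewrite -npL; apply: ler_wpM2l; first exact: expR_ge0.
    by apply: lerXn2r => //; rewrite nnegrE // expR_ge0.
  rewrite -expRM_natl -expRD ler_expR.
  have : k.+1%:R <= K.+1%:R :> R by rewrite ler_nat.
  have : p * k.+1%:R <= k.+1%:R by have := ler0n R k.+1; nra.
  have : p * n%:R <= p * m%:R + p * k.+1%:R by nra.
  nra.
rewrite sumr_const card_ord -[_ *+ K.+1]mulr_natl.
have LK : L ^+ K = expR (K%:R * ln L) by rewrite expRM_natl lnK // posrE.
rewrite /M LK -expRD.
apply: (@le_trans _ _ (expR K.+1%:R * expR (K%:R * ln L + (L / 5 - 2 / 3 * L + 2 / 3 * K.+1%:R)))).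
  by apply: ler_wpM2r; [exact: expR_ge0 | have := expR_ge1Dx (K.+1%:R : R); lra].
rewrite -expRD ler_expR; have := ler0n R K.+1; lra.
Qed.

Lemma path_exponent_le (L K T0 : R) : 100 <= T0 -> T0 ^+ 8 <= L -> 0 <= K ->
  K <= L `^ (3%:R / 4%:R) + 2 -> 2 * (K + 1) + K * ln L - 7 / 15 * L <= - T0.
Proof.
move=> T0_ge T0L K_ge0 K_le.
have T08 : 100 <= T0 ^+ 8.
  apply: le_trans (T0_ge) _; rewrite -[leLHS]expr1; apply: ler_weXn2l => //; lra.
have L_gt0 : 0 < L by lra.
set t := L `^ (7.+1%:R^-1); have t_ge0 : 0 <= t by apply: powR_ge0.
have t8 : t ^+ 8 = L by apply: powR_invnK; lra.
have T0_le_t : T0 <= t by rewrite -(@ler_pXn2r _ 8) ?nnegrE // ?t8 //; lra.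
have ln_le : ln L <= 8 * t := ln_le_root 7 L_gt0.
have t6 : L `^ (3%:R / 4%:R) = t ^+ 6.
  rewrite (_ : 3%:R / 4%:R = 7.+1%:R^-1 * 6%:R); last by field.
  by rewrite powRrM powR_mulrn.
have ln_ge0 : 0 <= ln L by apply: ln_ge0; lra.
have KlnL : K * ln L <= (t ^+ 6 + 2) * (8 * t) by rewrite -t6; apply: ler_pM.
have h8 : 100 * t ^+ 7 <= t ^+ 8 by have := exprn_ge0 7 t_ge0; rewrite [t ^+ 8]exprS; nra.
have h7 : t ^+ 6 <= t ^+ 7 by rewrite [t ^+ 7]exprS; have := exprn_ge0 6 t_ge0; nra.
have h6 : t <= t ^+ 6.
  have : 1 <= t ^+ 5 by apply: exprn_ege1; lra.
  by rewrite [t ^+ 6]exprS; nra.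
have ex : (t ^+ 6 + 2) * (8 * t) = 8 * t ^+ 7 + 16 * t by rewrite !exprS; ring.
rewrite ex -t8 in KlnL *; rewrite t6 in K_le; lra.
Qed.

End Estimates.

Unset Implicit Arguments.
Set Strict Implicit.

Theorem mainTheorem9 (R : realType) (s : R) (om : nat -> R) :
  1 < s ->
  (forall M : R, exists N : nat, forall n : nat, (N <= n)%N -> M <= om n) ->
  (exists C : R, exists N : nat, forall n : nat, (N <= n)%N ->
      n%:R * pn om n <= C * ln n%:R) ->
  forall eps : R, 0 < eps ->
  exists N : nat, forall n : nat, (N <= n)%N ->
    forall (v0 : 'I_n) (T : nat), bad_prob s (pn om n) v0 T <= eps.
Proof.
move=> s_gt1 om_to_inf [C [N_C np_le]] eps eps_gt0.
set T0 : R := 100 + `|ln eps|.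
have [N_om om_large] := om_to_inf (T0 ^+ 8).
have [N_e n_ge_e] := nat_ge_eventually (expR (expR (expR 1)) : R).
have [N_sq n_ge_sq] := nat_ge_eventually ((2 * C) ^+ 2).
exists (maxn (maxn N_om N_C) (maxn (maxn N_e N_sq) 1)) => n.
rewrite !geq_max => /andP[/andP[n_om n_C] /andP[/andP[n_e n_sq] n_gt0]] v0 T.
have n_ge1 : 1 <= n%:R :> R by rewrite ler1n.
set p := pn om n; set L := n%:R * p.
have L_eq : L = ln n%:R + om n by rewrite /L /p /pn mulrCA mulfV ?mulr1 // pnatr_eq0 -lt0n.
have T0_ge : 100 <= T0 by rewrite /T0; have := normr_ge0 (ln eps); lra.
have L_ge : T0 ^+ 8 <= L.
  by rewrite L_eq; have := om_large n n_om; have := ln_ge0 n_ge1; lra.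
have L_large : 100 <= L.
  apply: le_trans (L_ge); apply: le_trans (T0_ge) _.
  by rewrite -[leLHS]expr1 ler_weXn2l //; lra.
have p01 : 0 <= p <= 1.
  apply: (in01_of_le_ln n_ge1 (n_ge_sq n n_sq)).
  by apply/andP; split; [rewrite -/L; lra | exact: np_le].
set K := (Num.truncn (iter_bound n p)).+2.
have iter_le_K c : (c.+1)%:R <= iter_bound n p -> (c.+2 <= K)%N.
  by move=> c_le; rewrite /K !ltnS ltnW // truncn_gt_nat.
have K_le : K%:R <= iter_bound n p + 2.
  by rewrite /K -addn2 natrD lerD2r truncn_le powR_ge0.
apply: le_trans (bad_prob_le_paths v0 T _ p01 iter_le_K) _; first lra.
apply: le_trans (sum_path_bounds_le K p01 (erefl L) _) _; first lra.
rewrite -[leRHS]lnK ?posrE // ler_expR -(natr1 K).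
apply: le_trans (path_exponent_le T0_ge L_ge (ler0n _ _) _) _.
  by apply: le_trans K_le _; rewrite lerD2r iter_bound_le ?n_ge_e // -/L; lra.
by rewrite /T0; have := ler_norm (- ln eps); rewrite normrN; lra.
Qed.
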